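(* Let $M\ge 2$ be even, $T\ge1$, $\mathcal{X}=\{\pm1,\pm3,\ldots,\pm(M-1)\}\subset\mathbb{R}$ and $\mathcal{C}=\mathcal{X}^T$. Let $\mathbf{y}\in\mathbb{C}^T$, $\mathbf{y}\neq\mathbf 0$. Let $\mathbf{x}^{\mathrm{opt}}$ be any maximizer of $|\hat{\mathbf{x}}^\dagger\mathbf{y}|^2/\|\hat{\mathbf{x}}\|^2$ over $\hat{\mathbf{x}}\in\mathcal{C}$, let $h^{\mathrm{opt}}=(\mathbf{x}^{\mathrm{opt}})^\dagger\mathbf{y}/\|\mathbf{x}^{\mathrm{opt}}\|^2$ and $\lambda^{\mathrm{opt}}=1/h^{\mathrm{opt}}$. Then $|\mathrm{Re}(\lambda^{\mathrm{opt}}y_t)|\le M+T-2$ for all $t=1,\ldots,T$.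
   Context: $(\cdot)^\dagger$ is the Hermitian transpose and $\|\cdot\|$ the Euclidean norm. This is noncoherent GLRT detection of real $M$-ary PAM codewords of length $T$ transmitted over a complex-valued block fading channel $\mathbf{y}=h\mathbf{x}+\mathbf{n}$; since $\mathbf{y}\neq\mathbf 0$ the maximum is positive so $h^{\mathrm{opt}}\ne0$. *)

(* Complex numbers: an arbitrary numClosedFieldType C
   (e.g. algC). *)
From HB Require Import structures.
From mathcomp Require Import all_boot all_order all_algebra.
Set Implicit Arguments. Unset Strict Implicit. Unset Printing Implicit Defensive.
Import Order.TTheory GRing.Theory Num.Theory.
Local Open Scope ring_scope.

Definition pam_symbol (C : numClosedFieldType) (M : nat) (a : C) : Prop :=
  exists k : nat, (2 * k + 1 <= M - 1)%N /\
    (a = (2 * k + 1)%:R \/ a = - (2 * k + 1)%:R).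

Definition codeword (C : numClosedFieldType) (M T : nat) (x : 'I_T -> C) : Prop :=
  forall t, pam_symbol M (x t).

Definition herm_ip (C : numClosedFieldType) (T : nat) (x y : 'I_T -> C) : C :=
  \sum_(t < T) (x t)^* * y t.

Definition sqnorm (C : numClosedFieldType) (T : nat) (x : 'I_T -> C) : C :=
  \sum_(t < T) `|x t| ^+ 2.

Definition glrt_metric (C : numClosedFieldType) (T : nat) (x y : 'I_T -> C) : C :=
  `|herm_ip x y| ^+ 2 / sqnorm x.

(* Let x be a GLRT-optimal codeword for the observation y, N = ||x||^2,
   lambda = ||x||^2 / (x^dagger y) and r_s = Re (lambda y_s).  The proof has
   an analytic half and a combinatorial half.

   Analytic half: for every codeword x', Re (lambda x'^dagger y) = sum x'_s r_s,
   and GLRT optimality of x gives (sum x'_s r_s)^2 <= N ||x'||^2.  Taking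
   x' = x yields the stationarity identity  sum_s x_s (r_s - x_s) = 0; taking
   x' = x with a single symbol moved by d = +-2 yields the local condition
   d (r_s - x_s) <= 2 whenever x_s + d is still a symbol ("step optimality").

   Combinatorial half: step optimality bounds every deviation
   x_s (r_s - x_s) from below by -(M-1).  At a coordinate t with x_t = n > 0
   this gives r_t >= n - 1 >= 0; if n is not the largest symbol M - 1 then
   r_t <= n + 1, otherwise stationarity leaves a budget of (T-1)(M-1) for
   x_t (r_t - x_t), whence r_t <= M + T - 2.  Negative symbols follow by the
   sign symmetry x -> -x, r -> -r. *)
From HB Require Import structures.
From mathcomp Require Import all_boot all_order all_algebra.
From mathcomp Require Import zify ring.
Import Order.TTheory GRing.Theory Num.Theory.
Local Open Scope ring_scope.
Set Implicit Arguments. Unset Strict Implicit. Unset Printing Implicit Defensive.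

Lemma sum_update (I : finType) (V : zmodType) (F G : I -> V) (s : I) :
  (forall u, u != s -> F u = G u) ->
  \sum_u F u = \sum_u G u + (F s - G s).
Proof.
move=> eqFG; rewrite (bigD1 s) //= [in RHS](bigD1 s) //= (eq_bigr G) //.
by rewrite [RHS]addrAC subrKC.
Qed.

Lemma Re_sqr_le_normC2 (C : numClosedFieldType) (z : C) :
  'Re z ^+ 2 <= `|z| ^+ 2.
Proof. by rewrite normC2_Re_Im lerDl -realEsqr Creal_Im. Qed.

Lemma first_order_bound (R : numDomainType) (N e f : R) :
  0 < N -> 0 <= e ^+ 2 -> (N + e) ^+ 2 <= N * (N + f) -> e *+ 2 <= f.
Proof.
move=> N_gt0 e2_ge0; rewrite sqrrD mulrDr -expr2 -addrA lerD2l => hle.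
rewrite -(ler_pM2l N_gt0) mulrnAr; apply: le_trans hle.
by rewrite lerDl.
Qed.

Lemma step_from_first_order (R : numDomainType) (a d rho : R) :
  d ^+ 2 = 4 -> (d * rho) *+ 2 <= (a + d) ^+ 2 - a ^+ 2 -> d * (rho - a) <= 2.
Proof.
have -> : (a + d) ^+ 2 - a ^+ 2 = (d * a) *+ 2 + d ^+ 2 by ring.
move=> ->; rewrite -lerBlDl -mulrnBl -mulrBr.
have -> : 4 = 2 *+ 2 :> R by ring.
by rewrite lerMn2r.
Qed.

Section PamAlphabet.
Variables (C : numClosedFieldType) (M : nat).

Lemma pam_symbol_real (a : C) : pam_symbol M a -> a \is Num.real.
Proof. by case=> k [_ [->|->]]; rewrite ?rpredN realn. Qed.

Lemma pam_symbol_conj (a : C) : pam_symbol M a -> a^* = a.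
Proof. by move/pam_symbol_real/conj_Creal. Qed.

Lemma pam_symbol_sqr_ge1 (a : C) : pam_symbol M a -> 1 <= a ^+ 2.
Proof. by case=> k [_ [->|->]]; rewrite ?sqrrN -natrX ler1n expn_gt0 addn1. Qed.

Lemma pam_symbolN (a : C) : pam_symbol M a -> pam_symbol M (- a).
Proof.
by case=> k [hk [->|->]]; exists k; split=> //; rewrite ?opprK; [right|left].
Qed.

Lemma pam_symbol_down (k : nat) : (2 * k + 1 <= M - 1)%N ->
  pam_symbol M ((2 * k + 1)%:R - 2 : C).
Proof.
case: k => [|k] hk.
  by exists 0%N; split=> //; right; rewrite muln0 add0n -[2 : C]natr1 opprD addNKr.
exists k; split; first lia.
by left; rewrite (_ : (2 * k.+1 + 1 = 2 * k + 1 + 2)%N) ?natrD ?addrK //; lia.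
Qed.

Lemma pam_symbol_up (k : nat) : (2 * k + 3 <= M - 1)%N ->
  pam_symbol M ((2 * k + 1)%:R + 2 : C).
Proof.
move=> hk; exists k.+1; split; first lia.
by left; rewrite -natrD; congr _%:R; lia.
Qed.

End PamAlphabet.

Section Codewords.
Variables (C : numClosedFieldType) (M T : nat).

Lemma codeword_sqnorm (x : 'I_T -> C) : codeword M x ->
  sqnorm x = \sum_t x t ^+ 2.
Proof.
by move=> hx; apply: eq_bigr => t _; rewrite real_normK ?(pam_symbol_real (hx t)).
Qed.

Lemma codeword_herm_ip (x y : 'I_T -> C) : codeword M x ->
  herm_ip x y = \sum_t x t * y t.
Proof. by move=> hx; apply: eq_bigr => t _; rewrite (pam_symbol_conj (hx t)). Qed.

(* Symbols have modulus at least one, so codewords have norm at least T. *)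
Lemma codeword_sqnorm_gt0 (x : 'I_T -> C) : (1 <= T)%N -> codeword M x ->
  0 < sqnorm x.
Proof.
move=> hT hx; rewrite (codeword_sqnorm hx).
apply: (@lt_le_trans _ _ (\sum_(t < T) (1 : C))).
  by rewrite sumr_const card_ord ltr0n.
by apply: ler_sum => t _; apply: pam_symbol_sqr_ge1 (hx t).
Qed.

End Codewords.

(* rho is a step-optimal observation for the symbol a: moving a to any
   neighbouring symbol a + d (d = +-2) does not bring it closer to rho. *)
Definition step_optimal (C : numClosedFieldType) (M : nat) (a rho : C) : Prop :=
  forall d : C, (d = 2 \/ d = - 2) -> pam_symbol M (a + d) -> d * (rho - a) <= 2.

Section StepOptimality.
Variables (C : numClosedFieldType) (M : nat).

Lemma step_optimalN (a rho : C) :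
  step_optimal M a rho -> step_optimal M (- a) (- rho).
Proof.
move=> opt d hd /pam_symbolN; rewrite opprD opprK => hsym.
rewrite addrC -opprB mulrN -mulNr; apply: opt hsym.
by case: hd => ->; rewrite ?opprK; [right|left].
Qed.

Lemma step_optimal_lower (k : nat) (rho : C) : (2 * k + 1 <= M - 1)%N ->
  step_optimal M (2 * k + 1)%:R rho -> (2 * k + 1)%:R - 1 <= rho.
Proof.
move=> hk opt; have := opt _ (or_intror erefl) (pam_symbol_down C hk).
rewrite mulNr lerNl -[- 2]mulrN1 ler_pM2l ?ltr0n //.
by rewrite lerBrDr addrC.
Qed.

Lemma step_optimal_upper (k : nat) (rho : C) : (2 * k + 3 <= M - 1)%N ->
  step_optimal M (2 * k + 1)%:R rho -> rho <= (2 * k + 1)%:R + 1.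
Proof.
move=> hk opt; have := opt _ (or_introl erefl) (pam_symbol_up C hk).
by rewrite -[X in _ <= X]mulr1 ler_pM2l ?ltr0n // lerBlDl.
Qed.

(* A step-optimal observation never falls more than one unit short of its
   symbol towards zero, so the deviation a (rho - a) is at least -(M-1). *)
Lemma step_optimal_deviation (a rho : C) : pam_symbol M a ->
  step_optimal M a rho -> - (M - 1)%:R <= a * (rho - a).
Proof.
have pos k (rho' : C) : (2 * k + 1 <= M - 1)%N ->
    step_optimal M (2 * k + 1)%:R rho' ->
    - (M - 1)%:R <= (2 * k + 1)%:R * (rho' - (2 * k + 1)%:R).
  move=> hk opt; have hlow : -1 <= rho' - (2 * k + 1)%:R.
    by rewrite lerBrDr addrC (step_optimal_lower hk opt).
  apply: le_trans (ler_wpM2l (ler0n _ _) hlow).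
  by rewrite mulrN1 lerN2 ler_nat.
case=> k [hk [->|->]] opt; first exact: pos.
rewrite mulNr -mulrN opprB addrC; apply: pos hk _.
by rewrite -[X in step_optimal _ X _]opprK; apply: step_optimalN.
Qed.

End StepOptimality.

Section CoordinateBound.
Variables (C : numClosedFieldType) (M T : nat).
Hypotheses (hM : (2 <= M)%N) (hMeven : ~~ odd M).
Variables (x r : 'I_T -> C).
Hypotheses (hx : codeword M x) (hstep : forall s, step_optimal M (x s) (r s)).
Hypothesis hstat : \sum_s x s * (r s - x s) = 0.

(* Stationarity: a single deviation is paid for by the other T - 1 ones. *)
Lemma deviation_budget (t : 'I_T) :
  x t * (r t - x t) <= ((T - 1) * (M - 1))%:R.
Proof.
move: hstat; rewrite (bigD1 t) //= => /eqP; rewrite addr_eq0 => /eqP ->.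
rewrite -sumrN; apply: (@le_trans _ _ (\sum_(s < T | s != t) (M - 1)%:R)).
  by apply: ler_sum => s _; rewrite lerNl; apply: step_optimal_deviation.
by rewrite sumr_const cardC1 card_ord -mulrnA ler_nat !subn1 mulnC.
Qed.

(* At a positive symbol n the observation lies in [n - 1, n + 1], except at
   the largest symbol M - 1, where only the budget bounds it from above. *)
Lemma coordinate_bound_pos (k : nat) (t : 'I_T) : (2 * k + 1 <= M - 1)%N ->
  x t = (2 * k + 1)%:R -> `|r t| <= (M + T - 2)%:R.
Proof.
move=> hk xt; have opt : step_optimal M (2 * k + 1)%:R (r t) by rewrite -xt.
have r_ge0 : 0 <= r t.
  by apply: le_trans (step_optimal_lower hk opt); rewrite subr_ge0 ler1n addn1.
rewrite ger0_norm //; have [hup|htop] := boolP (2 * k + 3 <= M - 1)%N.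
  apply: le_trans (step_optimal_upper hup opt) _.
  by rewrite natr1 ler_nat; lia.
have top : (2 * k + 1 = M - 1)%N by lia.
have := deviation_budget t.
rewrite xt top natrM [_ * (M - 1)%:R]mulrC ler_pM2l ?ltr0n; last by lia.
rewrite lerBlDl -natrD => /le_trans; apply; rewrite ler_nat.
by have := ltn_ord t; lia.
Qed.

End CoordinateBound.

Lemma stationary_coordinate_bound (C : numClosedFieldType) (M T : nat)
    (x r : 'I_T -> C) (t : 'I_T) :
  (2 <= M)%N -> ~~ odd M -> codeword M x ->
  (forall s, step_optimal M (x s) (r s)) -> \sum_s x s * (r s - x s) = 0 ->
  `|r t| <= (M + T - 2)%:R.
Proof.
move=> hM hMeven hx hstep hstat; case: (hx t) => k [hk [xt|xt]].
  exact: (coordinate_bound_pos hM hMeven hx hstep hstat hk xt).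
rewrite -normrN.
apply: (coordinate_bound_pos (x := fun s => - x s) (r := fun s => - r s)
          hM hMeven _ _ _ hk).
- by move=> s; apply: pam_symbolN.
- by move=> s; apply: step_optimalN.
- by rewrite -[RHS]hstat; apply: eq_bigr => s _; rewrite -opprD mulrNN.
- by rewrite xt opprK.
Qed.

Section GlrtOptimality.
Variables (C : numClosedFieldType) (M T : nat) (y xopt : 'I_T -> C).
Hypotheses (hT : (1 <= T)%N) (hxopt : codeword M xopt).
Hypothesis hmax :
  forall x : 'I_T -> C, codeword M x -> glrt_metric x y <= glrt_metric xopt y.
Hypothesis hcorr : herm_ip xopt y != 0.

Let N := sqnorm xopt.
Let lambda := (herm_ip xopt y / sqnorm xopt)^-1.
Let r (s : 'I_T) := 'Re (lambda * y s).

Let N_gt0 : 0 < N. Proof. exact: codeword_sqnorm_gt0 hT hxopt. Qed.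

Lemma lambda_herm_ip : lambda * herm_ip xopt y = N.
Proof. by rewrite /lambda invf_div divfK. Qed.

(* Symbols are real, so lambda x^dagger y has real part sum_s x_s r_s. *)
Lemma Re_lambda_herm_ip (x : 'I_T -> C) : codeword M x ->
  'Re (lambda * herm_ip x y) = \sum_s x s * r s.
Proof.
move=> hx; rewrite (codeword_herm_ip _ hx) mulr_sumr raddf_sum.
by apply: eq_bigr => s _; rewrite mulrCA; exact: (ReMl (pam_symbol_real (hx s))).
Qed.

(* GLRT optimality of xopt, read through the equalizer lambda. *)
Lemma glrt_quadratic_bound (x : 'I_T -> C) : codeword M x ->
  (\sum_s x s * r s) ^+ 2 <= N * sqnorm x.
Proof.
move=> hx; rewrite -Re_lambda_herm_ip //.
have := hmax hx; rewrite /glrt_metric ler_pdivrMr ?(codeword_sqnorm_gt0 hT hx) //.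
move=> hm.
apply: le_trans (Re_sqr_le_normC2 _) _; rewrite normrM exprMn.
apply: le_trans (ler_wpM2l (exprn_ge0 2 (normr_ge0 lambda)) hm) _.
rewrite mulrA mulrA -exprMn -normrM lambda_herm_ip (ger0_norm (ltW N_gt0)).
by rewrite expr2 mulfK ?gt_eqF.
Qed.

Lemma glrt_correlation : \sum_s xopt s * r s = N.
Proof.
by rewrite -Re_lambda_herm_ip // lambda_herm_ip (Creal_ReP _ (gtr0_real N_gt0)).
Qed.

Lemma glrt_stationary : \sum_s xopt s * (r s - xopt s) = 0.
Proof.
rewrite (eq_bigr (fun s => xopt s * r s - xopt s ^+ 2)); last first.
  by move=> s _; rewrite mulrBr expr2.
by rewrite sumrB glrt_correlation -(codeword_sqnorm hxopt) subrr.
Qed.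

(* Local optimality: compare xopt with the codeword obtained by moving the
   symbol at s to the neighbouring symbol xopt s + d. *)
Lemma glrt_step_optimal (s : 'I_T) : step_optimal M (xopt s) (r s).
Proof.
move=> d hd hsym.
pose x u := if u == s then xopt s + d else xopt u.
have hx : codeword M x by move=> u; rewrite /x; case: ifP.
have x_off u : u != s -> x u = xopt u by rewrite /x => /negbTE ->.
have corr : \sum_u x u * r u = N + d * r s.
  rewrite (sum_update (G := fun u => xopt u * r u) (s := s)); last first.
    by move=> u /x_off ->.
  by rewrite glrt_correlation /x eqxx mulrDl addrAC subrr add0r.
have energy : sqnorm x = N + ((xopt s + d) ^+ 2 - xopt s ^+ 2).
  rewrite (codeword_sqnorm hx) (sum_update (G := fun u => xopt u ^+ 2) (s := s)).
    by rewrite -(codeword_sqnorm hxopt) /x eqxx.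
  by move=> u /x_off ->.
have d_real : d \is Num.real by case: hd => ->; rewrite ?rpredN realn.
apply: step_from_first_order; first by case: hd => ->; rewrite ?sqrrN -natrX.
apply: first_order_bound N_gt0 _ _; first by rewrite -realEsqr realM ?Creal_Re.
by rewrite -corr -energy glrt_quadratic_bound.
Qed.

End GlrtOptimality.

Unset Implicit Arguments.

Theorem mainTheorem4 (C : numClosedFieldType) (M T : nat)
  (hM : (2 <= M)%N) (hMeven : ~~ odd M) (hT : (1 <= T)%N)
  (y : 'I_T -> C) (hy : exists t, y t != 0)
  (xopt : 'I_T -> C) (hxopt : codeword M xopt)
  (hmax : forall x : 'I_T -> C, codeword M x -> glrt_metric x y <= glrt_metric xopt y) :
  let hopt := herm_ip xopt y / sqnorm xopt in
  let lambda := hopt^-1 in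
  forall t : 'I_T, `|'Re (lambda * y t)| <= (M + T - 2)%:R.
Proof.
move=> hopt lambda t.
have [corr0|corr] := eqVneq (herm_ip xopt y) 0.
  by rewrite /lambda /hopt corr0 mul0r invr0 mul0r raddf0 normr0 ler0n.
apply: (stationary_coordinate_bound (r := fun s => 'Re (lambda * y s)) t
          hM hMeven hxopt).
- exact: (glrt_step_optimal hT hxopt hmax corr).
- exact: (glrt_stationary hT hxopt corr).
Qed.
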